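(* Let $H$ be a graph and $k\ge2$, and suppose $G=\mathsf{TJ}_k(H)$ is triangle-free. Then any two distinct nonadjacent vertices of $G$ have at most two common neighbors.
   Context: All graphs are finite, simple, undirected. A $k$-clique of a graph $H$ is a set of $k$ pairwise adjacent vertices. For a graph $H$ and integer $k\ge1$, the Token Jumping graph $\mathsf{TJ}_k(H)$ has as vertices the $k$-cliques of $H$, and two $k$-cliques $A,B$ are adjacent iff $|A\cap B|=k-1$. *)

From mathcomp Require Import all_boot.
Set Implicit Arguments. Unset Strict Implicit. Unset Printing Implicit Defensive.

Definition simple_graph (T : finType) (e : rel T) : Prop :=
  symmetric e /\ irreflexive e.

Definition is_kclique (T : finType) (e : rel T) (k : nat) (A : {set T}) : bool :=
  (#|A| == k) && [forall x in A, forall y in A, (x != y) ==> e x y].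

Definition tj_adj (T : finType) (e : rel T) (k : nat) (A B : {set T}) : bool :=
  [&& is_kclique e k A, is_kclique e k B & #|A :&: B| == k.-1].

Definition tj_triangle_free (T : finType) (e : rel T) (k : nat) : Prop :=
  forall A B C : {set T}, ~ [&& tj_adj e k A B, tj_adj e k B C & tj_adj e k A C].

Definition tj_common_nbrs (T : finType) (e : rel T) (k : nat) (A B : {set T})
  : {set {set T}} :=
  [set C : {set T} | tj_adj e k A C && tj_adj e k B C].

(* Let A, B be distinct nonadjacent k-cliques, so #|A :&: B| <= k - 2. Counting inside a common
   neighbour C, #|A :&: C| = #|B :&: C| = k - 1 forces #|A :&: B :&: C| >= k - 2; hence A :&: B
   lies in C, and if such a C exists then #|A :\: B| <= 2. Each A :&: C is A minus one point of
   A :\: B, and C |-> A :&: C is injective on neighbours of A: two neighbours with the same trace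
   on A share k - 1 vertices, so they would be adjacent and form a triangle with A. *)

From mathcomp Require Import all_boot.
From mathcomp Require Import zify.

Set Implicit Arguments.
Unset Strict Implicit.
Unset Printing Implicit Defensive.

Lemma card_setI_lt (T : finType) (n : nat) (A B : {set T}) :
  #|A| = n -> #|B| = n -> A != B -> #|A :&: B| < n.
Proof.
move=> cardA cardB neqAB; rewrite -cardA; apply: proper_card.
rewrite properE subsetIl subsetI subxx /=.
by apply: contra neqAB => subAB; rewrite eqEcard subAB cardA cardB /=.
Qed.

Lemma leq_cardsI2 (T : finType) (A B C : {set T}) :
  #|A :&: C| + #|B :&: C| <= #|C| + #|A :&: B :&: C|.
Proof.
rewrite -cardsUI setIACA setIid leq_add2r subset_leq_card //.
by rewrite subUset !subsetIr.
Qed.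

Section TokenJumping.

Variables (T : finType) (e : rel T) (k : nat).

Lemma kclique_card (A : {set T}) : is_kclique e k A -> #|A| = k.
Proof. by case/andP=> /eqP. Qed.

Lemma tj_adj_card (A B : {set T}) : tj_adj e k A B -> #|A :&: B| = k.-1.
Proof. by case/and3P=> _ _ /eqP. Qed.

Lemma tj_adj_kclique (A B : {set T}) :
  tj_adj e k A B -> is_kclique e k A /\ is_kclique e k B.
Proof. by case/and3P. Qed.

Lemma tj_nonadj_card_setI (A B : {set T}) :
  is_kclique e k A -> is_kclique e k B -> A != B -> ~~ tj_adj e k A B ->
  #|A :&: B| <= k - 2.
Proof.
move=> cliqA cliqB neqAB nadjAB.
have := card_setI_lt (kclique_card cliqA) (kclique_card cliqB) neqAB.
have : #|A :&: B| != k.-1 by apply: contra nadjAB => cardAB; rewrite /tj_adj cliqA cliqB.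
lia.
Qed.

Lemma tj_common_nbr_card_setI (A B C : {set T}) :
  tj_adj e k A C -> tj_adj e k B C -> k - 2 <= #|A :&: B :&: C|.
Proof.
move=> adjAC adjBC; have := leq_cardsI2 A B C.
rewrite (tj_adj_card adjAC) (tj_adj_card adjBC).
rewrite (kclique_card (proj2 (tj_adj_kclique adjAC))); lia.
Qed.

Lemma tj_common_nbr_supset (A B C : {set T}) :
  is_kclique e k A -> is_kclique e k B -> A != B -> ~~ tj_adj e k A B ->
  tj_adj e k A C -> tj_adj e k B C -> A :&: B \subset C.
Proof.
move=> cliqA cliqB neqAB nadjAB adjAC adjBC.
have meet_eq : A :&: B :&: C == A :&: B.
  rewrite eqEcard subsetIl /=.
  have := tj_nonadj_card_setI cliqA cliqB neqAB nadjAB.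
  have := tj_common_nbr_card_setI adjAC adjBC; lia.
by rewrite -(eqP meet_eq) subsetIr.
Qed.

Lemma tj_adj_setI_setD1 (A C : {set T}) :
  0 < k -> tj_adj e k A C -> exists2 x, x \in A :\: C & A :&: C = A :\ x.
Proof.
move=> k_gt0 adjAC; have [cliqA _] := tj_adj_kclique adjAC.
have cardA := kclique_card cliqA; have cardAC := tj_adj_card adjAC.
have : A :&: C \proper A by rewrite properEcard subsetIl cardAC cardA; lia.
case/properP=> _ [x xA xnAC]; have xnC : x \notin C by move: xnAC; rewrite inE xA.
exists x; first by rewrite inE xA xnC.
apply/eqP; rewrite eqEcard cardAC.
have := cardsD1 x A; rewrite xA cardA => cardAx; apply/andP; split; last by lia.
apply/subsetP=> y /setIP[yA yC]; rewrite !inE yA andbT.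
by apply: contraNneq xnC => <-.
Qed.

Lemma tj_nbr_setI_inj (A C D : {set T}) :
  tj_triangle_free e k -> tj_adj e k A C -> tj_adj e k A D ->
  A :&: C = A :&: D -> C = D.
Proof.
move=> tri_free adjAC adjAD traceCD; apply/eqP/negPn/negP => neqCD.
have [_ cliqC] := tj_adj_kclique adjAC; have [_ cliqD] := tj_adj_kclique adjAD.
have geCD : k.-1 <= #|C :&: D|.
  by rewrite -(tj_adj_card adjAC) subset_leq_card // subsetI subsetIr traceCD subsetIr.
have ltCD := card_setI_lt (kclique_card cliqC) (kclique_card cliqD) neqCD.
have cardCD : #|C :&: D| == k.-1 by apply/eqP; lia.
by apply: (tri_free A C D); rewrite adjAC adjAD /tj_adj cliqC cliqD cardCD.
Qed.

Lemma tj_common_nbrs_card_le (A B : {set T}) :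
  0 < k -> tj_triangle_free e k ->
  is_kclique e k A -> is_kclique e k B -> A != B -> ~~ tj_adj e k A B ->
  #|tj_common_nbrs e k A B| <= #|A :\: B|.
Proof.
move=> k_gt0 tri_free cliqA cliqB neqAB nadjAB.
set S := tj_common_nbrs e k A B.
have trace_inj : {in S &, injective (fun C => A :&: C)}.
  by move=> C D; rewrite !inE => /andP[adjAC _] /andP[adjAD _]; apply: tj_nbr_setI_inj.
have traces : [set A :&: C | C in S] \subset [set A :\ x | x in A :\: B].
  apply/subsetP=> _ /imsetP[C + ->]; rewrite inE => /andP[adjAC adjBC].
  have [x /setDP[xA xnC] ->] := tj_adj_setI_setD1 k_gt0 adjAC.
  apply: imset_f; rewrite inE xA andbT; apply: contra xnC => xB.
  apply: (subsetP (tj_common_nbr_supset cliqA cliqB neqAB nadjAB adjAC adjBC)).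
  by rewrite inE xA xB.
rewrite -(card_in_imset trace_inj).
exact: leq_trans (subset_leq_card traces) (leq_imset_card _ _).
Qed.

End TokenJumping.

Theorem lemma4p6 (T : finType) (e : rel T) (k : nat) :
  simple_graph e -> 2 <= k -> tj_triangle_free e k ->
  forall A B : {set T},
    is_kclique e k A -> is_kclique e k B -> A != B -> ~~ tj_adj e k A B ->
    #|tj_common_nbrs e k A B| <= 2.
Proof.
move=> _ k_ge2 tri_free A B cliqA cliqB neqAB nadjAB.
have [-> | [C]] := set_0Vmem (tj_common_nbrs e k A B); first by rewrite cards0.
rewrite inE => /andP[adjAC adjBC].
have := tj_common_nbrs_card_le (ltnW k_ge2) tri_free cliqA cliqB neqAB nadjAB.
have : #|A :&: B :&: C| <= #|A :&: B| by rewrite subset_leq_card // subsetIl.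
have := tj_common_nbr_card_setI adjAC adjBC.
rewrite cardsD (kclique_card cliqA); lia.
Qed.
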